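(* The sequence $\left(\frac{h(n)}{\log n}\right)_{n=2}^\infty$ is $\mathcal I_0$-convergent to $0$; that is, for every $\varepsilon>0$ the set $\{n\ge 2: \frac{h(n)}{\log n}\ge\varepsilon\}$ belongs to $\mathcal I_0$.
   Context: $\mathbb N$ denotes the set of positive integers. For $n>1$ with canonical factorization $n=p_1^{\alpha_1}\cdots p_k^{\alpha_k}$ (distinct primes $p_j$, $\alpha_j\ge1$), $h(n)=\min_{1\le j\le k}\alpha_j$. For $A\subset\mathbb N$ the convergence exponent is $\lambda(A)=\inf\{t>0:\sum_{a\in A}a^{-t}<\infty\}$, and $\mathcal I_0=\{A\subset\mathbb N:\lambda(A)=0\}$. A sequence $(x_n)$ is $\mathcal I$-convergent to $L$ if for every $\varepsilon>0$ the set $\{n:|x_n-L|\ge\varepsilon\}$ belongs to $\mathcal I$. *)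

From mathcomp Require Import ssreflect ssrbool ssrnat seq prime.
From Stdlib Require Import Reals ClassicalDescription.

(* h n = min_j alpha_j where n = prod p_j^alpha_j (canonical factorization);
   primes n is the sorted list of prime divisors, logn p n the exponent.
   For n > 1 the list is nonempty; the value for n <= 1 is irrelevant (0). *)
Definition h (n : nat) : nat :=
  match primes n with
  | [::] => 0
  | p :: ps => foldr (fun q m => minn (logn q n) m) (logn p n) ps
  end.

Open Scope R_scope.

(* sum_{a in A} a^{-t} converges (A is a set of positive integers;
   terms with k = 0 are excluded since A ⊂ N = {1,2,...}). *)
Definition series_conv (A : nat -> Prop) (t : R) : Prop :=
  exists l : R, infinite_sum
    (fun k => match k with
              | O => 0
              | S _ => if excluded_middle_informative (A k)
                       then Rpower (INR k) (- t) else 0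
              end) l.

Definition is_glb (E : R -> Prop) (m : R) : Prop :=
  (forall x, E x -> m <= x) /\ (forall b, (forall x, E x -> b <= x) -> b <= m).

(* convergence exponent lambda(A) = inf {t > 0 : series_conv A t};
   lambda(A) = 0 means 0 is the infimum of this set (in particular the set
   is nonempty, since inf of the empty set is +infinity). *)
Definition conv_exp_zero (A : nat -> Prop) : Prop :=
  is_glb (fun t => 0 < t /\ series_conv A t) 0.

Definition in_I0 (A : nat -> Prop) : Prop :=
  (forall n, A n -> (1 <= n)%nat) /\ conv_exp_zero A.

(* Fix eps > 0 and let A = {n >= 2 : h(n) / ln n >= eps}.
   If n is in A and p is a prime factor of n, then p^(h n) <= p^(logn p n) <= n,
   hence h(n) ln p <= ln n <= h(n) / eps, i.e. ln p <= 1 / eps.  So every element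
   of A is C-smooth (all its prime factors are <= C) for any integer
   C > exp (1/eps).  For every t > 0 the series of n^-t over the C-smooth numbers
   converges (it is the finite Euler product prod_(p <= C) 1/(1 - p^-t)); we
   prove that its partial sums are bounded by induction on C: a (C+1)-smooth
   number is either C-smooth or q times a q-smooth number when q = C+1 is prime,
   which yields S_q(M) <= B + q^-t S_q(M / q) and hence S_q(M) <= B / (1 - q^-t).
   By comparison the series defining series_conv A t converges for every t > 0,
   so 0 is the infimum of the convergence set and A belongs to I_0. *)
From Stdlib Require Import Reals Lra Lia.
From mathcomp Require Import ssreflect ssrbool.
From mathcomp Require eqtype ssrnat seq div prime.
Open Scope R_scope.

(* The arithmetic below uses mathcomp's boolean comparisons on nat; it is kept
   in a module so that the statement of theorem6 reads (2 <= n)%nat as Peano.le. *)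
Module SmoothNumbers.
Import eqtype ssrnat seq div prime.

Definition smooth (C n : nat) : bool :=
  (0 < n)%N && all (fun p => p <= C)%N (primes n).

Definition smooth_weight (t : R) (C n : nat) : R :=
  if smooth C n then Rpower (INR n) (- t) else 0.

Lemma Rpower_pos (x y : R) : 0 < Rpower x y.
Proof. exact: exp_pos. Qed.

Lemma smooth_weight_ge0 (t : R) (C n : nat) : 0 <= smooth_weight t C n.
Proof.
rewrite /smooth_weight; case: (smooth C n); last exact: Rle_refl.
exact/Rlt_le/Rpower_pos.
Qed.

Lemma INR_gt1 (n : nat) : (1 < n)%N -> 1 < INR n.
Proof. by move=> /ltP/lt_INR. Qed.

Lemma smooth0 (n : nat) : smooth 0 n = (n == 1)%N.
Proof.
case: n => [|[|n]] //; rewrite /smooth /=.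
have p_in : pdiv n.+2 \in primes n.+2 by rewrite mem_primes pdiv_prime ?pdiv_dvd.
apply/negbTE/negP => /allP /(_ _ p_in); rewrite leqn0 => /eqP p0.
by move: (pdiv_prime (isT : (1 < n.+2)%N)); rewrite p0.
Qed.

Lemma sum_smooth_weight0 (t : R) (M : nat) : sum_f_R0 (smooth_weight t 0) M <= 1.
Proof.
have w1 : smooth_weight t 0 1 = 1 by rewrite /smooth_weight smooth0 /Rpower ln_1 Rmult_0_r exp_0.
have w0 n : n <> 1%N -> smooth_weight t 0 n = 0.
  by move=> /eqP n1; rewrite /smooth_weight smooth0 (negbTE n1).
elim: M => [|[|M] IH] /=; first by rewrite w0 //; lra.
- by rewrite w0 // w1; lra.
- by move: IH => /=; rewrite (w0 M.+2) //; lra.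
Qed.

Lemma smooth_succ_nonprime (C n : nat) : ~~ prime C.+1 -> smooth C.+1 n = smooth C n.
Proof.
move=> np; rewrite /smooth; congr andb; apply/allP/allP => smooth_n p p_in; last first.
  exact/leqW/smooth_n.
move: (smooth_n p p_in); rewrite leq_eqVlt => /orP [/eqP pC|//].
by move: p_in np; rewrite mem_primes pC => /andP [->].
Qed.

Lemma smooth_succ_split (C n : nat) : smooth C.+1 n -> ~~ smooth C n ->
  (C.+1 %| n)%N /\ smooth C.+1 (n %/ C.+1).
Proof.
rewrite /smooth => /andP [n0 /allP small]; rewrite n0 /= -has_predC => /hasP [p p_in pC].
have pq : p = C.+1 by apply/eqP; rewrite eqn_leq small // ltnNge.
have dq : (C.+1 %| n)%N by move: p_in; rewrite mem_primes pq => /and3P [].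
have nq0 : (0 < n %/ C.+1)%N by rewrite divn_gt0 // dvdn_leq.
split=> //; rewrite nq0 /=; apply/allP => r.
rewrite mem_primes => /and3P [r_prime _ r_dvd]; apply: small.
by rewrite mem_primes r_prime n0 (dvdn_trans r_dvd) ?dvdn_div.
Qed.

(* Pointwise form of the Euler-product recursion for a prime q = C + 1. *)
Lemma smooth_weight_split (t : R) (C n : nat) : prime C.+1 ->
  smooth_weight t C.+1 n <= smooth_weight t C n +
    (if C.+1 %| n then smooth_weight t C.+1 (n %/ C.+1) * Rpower (INR C.+1) (- t) else 0).
Proof.
move=> q_prime.
set tail := if C.+1 %| n then _ else _.
have tail_ge0 : 0 <= tail.
  rewrite /tail; case: ifP => _; last exact: Rle_refl.
  exact/Rmult_le_pos/Rlt_le/Rpower_pos/smooth_weight_ge0.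
have := smooth_weight_ge0 t C n.
rewrite /smooth_weight; case sq: (smooth C.+1 n); last lra.
case sC: (smooth C n); first lra.
have [dq sdiv] := smooth_succ_split C n sq (negbT sC).
have n0 : (0 < n %/ C.+1)%N by move: sdiv; rewrite /smooth => /andP [].
rewrite /tail dq /smooth_weight sdiv Rpower_mult_distr; try exact/lt_0_INR/ltP.
by rewrite -mult_INR multE divnK //; lra.
Qed.

Lemma sum_multiples (q : nat) (g : nat -> R) (M : nat) : (0 < q)%N ->
  sum_f_R0 (fun n => if q %| n then g (n %/ q) else 0) M = sum_f_R0 g (M %/ q).
Proof.
move=> q0; elim: M => [|M IH] /=; first by rewrite dvdn0 div0n.
rewrite IH (divnS _ q0); case: (q %| M.+1).
- by rewrite add1n.
- by rewrite add0n Rplus_0_r.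
Qed.

Lemma self_similar_bound (S : nat -> R) (B r : R) (q : nat) :
  (1 < q)%N -> 0 <= r < 1 -> (forall k, S k <= B + r * S (k %/ q)) ->
  forall k, S k <= B / (1 - r).
Proof.
move=> q1 r01 rec k; elim: k {-2}k (leqnn k) => [|K IH] k kK.
  move: kK; rewrite leqn0 => /eqP ->; have := rec 0%N; rewrite div0n => S0.
  apply: (Rmult_le_reg_r (1 - r)); first lra.
  by rewrite /Rdiv Rmult_assoc Rinv_l; lra.
case: k kK => [|k] kK; first exact: IH.
have small : (k.+1 %/ q <= K)%N by rewrite -ltnS (leq_trans (ltn_Pdiv q1 (ltn0Sn k)) kK).
have rS := Rmult_le_compat_l r _ _ (proj1 r01) (IH _ small).
have := rec k.+1; have -> : B / (1 - r) = B + r * (B / (1 - r)) by field; lra.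
lra.
Qed.

Lemma smooth_partial_sums_bounded (t : R) (C : nat) : 0 < t ->
  exists B, forall M, sum_f_R0 (smooth_weight t C) M <= B.
Proof.
move=> t_pos; elim: C => [|C [B boundC]]; first by exists 1; apply: sum_smooth_weight0.
case q_prime: (prime C.+1); last first.
  exists B => M; rewrite (PartSum.sum_eq _ (smooth_weight t C)) // => n _.
  by rewrite /smooth_weight smooth_succ_nonprime ?q_prime.
set r := Rpower (INR C.+1) (- t).
have r01 : 0 <= r < 1.
  split; first exact/Rlt_le/Rpower_pos.
  have q_gt1 : 1 < INR C.+1 by apply/INR_gt1/prime_gt1.
  by have := Rpower_lt _ (- t) 0 q_gt1 ltac:(lra); rewrite /r Rpower_O; lra.
exists (B / (1 - r)); apply: (self_similar_bound _ _ _ _ (prime_gt1 q_prime) r01) => M.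
rewrite scal_sum -(sum_multiples C.+1 (fun m => smooth_weight t C.+1 m * r)) //.
apply: Rle_trans (sum_Rle _ _ _ (fun n _ => smooth_weight_split t C n q_prime)) _.
by rewrite plus_sum /r; have := boundC M; lra.
Qed.

Lemma smooth_series_cv (t : R) (C : nat) : 0 < t ->
  {l | Un_cv (sum_f_R0 (smooth_weight t C)) l}.
Proof.
move=> t_pos; apply: growing_cv.
- move=> M /=; have := smooth_weight_ge0 t C M.+1; lra.
- have [B bound] := smooth_partial_sums_bounded t C t_pos.
  by exists B => _ [M ->].
Qed.

Lemma series_conv_of_smooth (A : nat -> Prop) (C : nat) (t : R) :
  0 < t -> (forall n, A n -> smooth C n) -> series_conv A t.
Proof.
move=> t_pos A_smooth; rewrite /series_conv.
match goal with |- exists l, infinite_sum ?a l => set term := a end.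
have term_dominated k : 0 <= term k <= smooth_weight t C k.
  case: k => [|n]; rewrite /term /=; first by rewrite /smooth_weight /=; lra.
  destruct (ClassicalDescription.excluded_middle_informative (A n.+1)) as [An|not_An]; rewrite /=.
    by rewrite /smooth_weight A_smooth //; split; [exact/Rlt_le/Rpower_pos | exact: Rle_refl].
  by have := smooth_weight_ge0 t C n.+1; lra.
have [l cv] := Rseries_CV_comp _ _ term_dominated (smooth_series_cv t C t_pos).
by exists l.
Qed.

Lemma h_le_logn (n p : nat) : p \in primes n -> (h n <= logn p n)%N.
Proof.
rewrite /h; case: (primes n) => [//|a ps].
elim: ps => [|b ps IH] /=; first by rewrite inE => /eqP ->.
rewrite !inE => /orP [pa|/orP [/eqP ->|p_in]].
- by apply: leq_trans (geq_minr _ _) _; apply: IH; rewrite inE pa.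
- exact: geq_minl.
- by apply: leq_trans (geq_minr _ _) _; apply: IH; rewrite inE p_in orbT.
Qed.

Lemma INR_expn (p k : nat) : INR (p ^ k) = INR p ^ k.
Proof. by elim: k => [|k IH] //; rewrite expnS -multE mult_INR IH. Qed.

Lemma ln_le_mono (x y : R) : 0 < x -> x <= y -> ln x <= ln y.
Proof.
move=> x0 [xy|<-]; [exact/Rlt_le/ln_increasing | exact: Rle_refl].
Qed.

Lemma large_h_prime_factor (eps : R) (n p : nat) : 0 < eps -> (2 <= n)%N ->
  INR (h n) / ln (INR n) >= eps -> p \in primes n -> eps * ln (INR p) <= 1.
Proof.
move=> eps_pos n2 large p_in.
have p1 : (1 < p)%N by apply: prime_gt1; move: p_in; rewrite mem_primes => /andP [].
have n_gt1 : 1 < INR n by exact: INR_gt1.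
have p_gt1 : 1 < INR p by exact: INR_gt1.
have ln_n : 0 < ln (INR n) by rewrite -ln_1; apply: ln_increasing; lra.
have h_large : eps * ln (INR n) <= INR (h n).
  have -> : INR (h n) = INR (h n) / ln (INR n) * ln (INR n) by field; lra.
  by apply: Rmult_le_compat_r; lra.
have pow_le_n : (p ^ h n <= n)%N.
  rewrite (leq_trans _ (dvdn_leq _ (pfactor_dvdnn p n))) ?leq_exp2l ?h_le_logn //.
  exact: ltnW.
have h_ln : INR (h n) * ln (INR p) <= ln (INR n).
  rewrite -ln_pow; last lra.
  rewrite -INR_expn; apply/ln_le_mono/le_INR/leP => //.
  by apply/lt_0_INR/ltP; rewrite expn_gt0 (ltnW p1).
have h_pos : 0 < INR (h n) by nra.
by apply: (Rmult_le_reg_l (INR (h n))) => //; nra.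
Qed.

Lemma large_h_smooth (eps : R) (C n : nat) : 0 < eps -> exp (1 / eps) < INR C ->
  (2 <= n)%N -> INR (h n) / ln (INR n) >= eps -> smooth C n.
Proof.
move=> eps_pos C_large n2 large; rewrite /smooth (leq_trans _ n2) //=.
apply/allP => p p_in; apply/ltnW/ltP/INR_lt.
have p0 : 0 < INR p.
  by apply/lt_0_INR/ltP/prime_gt0; move: p_in; rewrite mem_primes => /andP [].
apply: Rle_lt_trans C_large; rewrite -(exp_ln (INR p)) //.
have ln_p_small : ln (INR p) <= 1 / eps.
  apply: (Rmult_le_reg_l eps) => //; have -> : eps * (1 / eps) = 1 by field; lra.
  exact: large_h_prime_factor eps n p eps_pos n2 large p_in.
by case: ln_p_small => [lt|->]; [exact/Rlt_le/exp_increasing | exact: Rle_refl].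
Qed.

Lemma conv_exp_zero_of_series_conv (A : nat -> Prop) :
  (forall t, 0 < t -> series_conv A t) -> conv_exp_zero A.
Proof.
move=> cv; split=> [x [x_pos _]|b lower]; first lra.
apply: Rnot_lt_le => b_pos.
have half_pos : 0 < b / 2 by lra.
have := lower (b / 2) (conj half_pos (cv _ half_pos)); lra.
Qed.

End SmoothNumbers.

Import SmoothNumbers.

Theorem theorem6 (eps : R) (heps : 0 < eps) :
  in_I0 (fun n : nat => (2 <= n)%nat /\ INR (h n) / ln (INR n) >= eps).
Proof.
split=> [n [n2 _]|]; first by apply/ssrnat.leP; lia.
apply: conv_exp_zero_of_series_conv => t t_pos.
have [C C_large] := INR_unbounded (exp (1 / eps)).
apply: (series_conv_of_smooth _ C) => // n [n2 large].
exact: (large_h_smooth eps C n heps C_large (introT ssrnat.leP n2) large).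
Qed.
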